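(* For every positive integer $n$, let $S_n$ be the tournament on vertex set $\{v_1,\ldots,v_n\}$ obtained as follows: start from the acyclic tournament in which, for all $1\le j<i\le n$, the edge between $v_i$ and $v_j$ is directed from $v_i$ to $v_j$ (so the out-neighbours of $v_i$ are $v_1,\ldots,v_{i-1}$), and then reverse the edges of the Hamiltonian path $v_n,v_{n-1},\ldots,v_1$ (i.e. for each $1\le i\le n-1$ the edge $v_{i+1}\to v_i$ is replaced by $v_i\to v_{i+1}$). Then $$P(S_n;x)=\sum_{i=1}^n\binom{i}{n-i}x(x-1)^{i-1}.$$
   Context: For a positive integer $k$, a proper $k$-coloring of a digraph $D$ is a map $c:V(D)\to\{1,\ldots,k\}$ such that each color class induces a subdigraph with no directed cycle. The number of proper $k$-colorings of $D$ is a polynomial in $k$, denoted $P(D;k)$ (the dichromatic polynomial). $\binom{i}{m}=0$ when $m>i$. *)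

From mathcomp Require Import all_boot.
Set Implicit Arguments. Unset Strict Implicit. Unset Printing Implicit Defensive.

(* A digraph on a finite vertex type T is an edge relation e : rel T
   (e x y means the arc x -> y). *)

Definition induced_rel (T : finType) (e : rel T) (A : {set T}) : rel T :=
  [rel x y | [&& e x y, x \in A & y \in A]].

Definition has_dicycle_in (T : finType) (e : rel T) (A : {set T}) : bool :=
  [exists x, exists y,
     [&& x \in A, y \in A, e x y & connect (induced_rel e A) y x]].

Definition proper_coloring (T : finType) (e : rel T) (k : nat)
  (c : {ffun T -> 'I_k}) : bool :=
  [forall j : 'I_k, ~~ has_dicycle_in e [set v | c v == j]].

(* Dichromatic polynomial evaluated at k: number of proper k-colorings. *)
Definition dichromatic (T : finType) (e : rel T) (k : nat) : nat :=
  #|[set c : {ffun T -> 'I_k} | proper_coloring e c]|.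

(* The tournament S_n on 'I_n (vertex v_{i+1} is the ordinal i).
   Base: a -> b iff b < a (acyclic tournament); then the arcs of the
   Hamiltonian path v_n, ..., v_1 are reversed: a -> a+1 instead of
   a+1 -> a. *)
Definition S_tour (n : nat) : rel 'I_n :=
  [rel a b | (val b == (val a).+1) || ((val b < val a) && (val a != (val b).+1))].

From mathcomp Require Import all_boot zify.
Set Implicit Arguments. Unset Strict Implicit. Unset Printing Implicit Defensive.

(* A vertex set A induces an acyclic subtournament of S_n iff it contains no
   three consecutive vertices: v_i -> v_(i+1) -> v_(i+2) -> v_i is a cycle, and
   otherwise 2i + 3[v_(i+1) \in A] strictly decreases along every arc inside A.
   So proper k-colourings are the words of length n over k letters with no three
   equal consecutive letters.  Counting them by their first two letters, with
   q = k - 1, the number a_m of such words of length m + 1 with a fixed first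
   letter satisfies a_(m+2) = q (a_(m+1) + a_m), and so does
   a_m = sum_j 'C(j+1, m-j) q^j: cut the word into j + 1 runs of length 1 or 2
   and choose a new letter for each run after the first. *)

Lemma connect_potential_leq (T : finType) (e : rel T) (f : T -> nat) :
  (forall x y, e x y -> f y < f x) -> forall x y, connect e x y -> f y <= f x.
Proof.
move=> f_dec x y /connectP [p e_p ->] {y}.
elim: p x e_p => //= y p IHp x /andP [exy /IHp le_fy].
exact: leq_trans le_fy (ltnW (f_dec _ _ exy)).
Qed.

Lemma potential_no_dicycle (T : finType) (e : rel T) (A : {set T}) (f : T -> nat) :
  {in A &, forall x y, e x y -> f y < f x} -> ~~ has_dicycle_in e A.
Proof.
move=> f_dec; apply/existsP => -[x /existsP [y /and4P [Ax Ay exy cyx]]].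
have f_dec_in u v : induced_rel e A u v -> f v < f u.
  by case/and3P=> euv Au Av; apply: f_dec.
by move: (connect_potential_leq f_dec_in cyx); rewrite leqNgt f_dec.
Qed.

Section Tournament.
Variable n : nat.
Implicit Types (a b : 'I_n) (A : {set 'I_n}).

Lemma S_tourE a b : S_tour a b = (b == a.+1 :> nat) || (b < a) && (a != b.+1 :> nat).
Proof. by []. Qed.

Definition has_consecutive3 A :=
  [exists x in A, exists y in A, exists z in A, (y == x.+1 :> nat) && (z == y.+1 :> nat)].

Lemma S_tour_dicycle A : has_dicycle_in (@S_tour n) A = has_consecutive3 A.
Proof.
have arcE a b : induced_rel (@S_tour n) A a b = [&& S_tour a b, a \in A & b \in A] by [].
apply/idP/idP; last first.
  case/existsP=> x /andP [Ax /existsP [y /andP [Ay /existsP [z /andP [Az]]]]].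
  case/andP=> /eqP yx /eqP zy; apply/existsP; exists x; apply/existsP; exists y.
  rewrite Ax Ay S_tourE yx eqxx /=; apply: (connect_trans (y := z)); apply: connect1.
    by rewrite arcE Ay Az S_tourE zy eqxx.
  by rewrite arcE Az Ax S_tourE zy yx; lia.
apply: contraLR => no3.
pose f (x : 'I_n) := x.*2 + 3 * [exists y in A, y == x.+1 :> nat].
apply: (potential_no_dicycle (f := f)) => x y Ax Ay.
rewrite S_tourE => /orP [/eqP yx | /andP [yx xy]].
  have fx : f x = x.*2 + 3.
    rewrite /f (_ : [exists _ in A, _] = true) //.
    by apply/existsP; exists y; rewrite Ay yx eqxx.
  have fy : f y = y.*2.
    rewrite /f (_ : [exists _ in A, _] = false) ?muln0 ?addn0 //.
    apply: contraNF no3 => /existsP [z /andP [Az zy]]; apply/existsP; exists x.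
    rewrite Ax; apply/existsP; exists y; rewrite Ay yx eqxx.
    by apply/existsP; exists z; rewrite Az -yx zy.
  lia.
have fy : f y <= y.*2 + 3 by rewrite leq_add2l; case: existsP.
have fx : x.*2 <= f x by apply: leq_addr.
lia.
Qed.

End Tournament.

Fixpoint triple_free (T : eqType) (s : seq T) : bool :=
  if s is x :: ((y :: z :: _) as s') then ~~ ((x == y) && (y == z)) && triple_free s'
  else true.

Lemma triple_freeP (T : eqType) (x0 : T) (s : seq T) :
  reflect (forall i, i.+2 < size s ->
             ~~ ((nth x0 s i == nth x0 s i.+1) && (nth x0 s i.+1 == nth x0 s i.+2)))
          (triple_free s).
Proof.
elim: s => [|x [|y [|z s]] IHs]; try by constructor; case.
apply: (iffP andP) => [[xyz /IHs tf_s] [_|i /tf_s] // | tf].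
by split; [apply: (tf 0) | apply/IHs => i /(tf i.+1)].
Qed.

Lemma nth_codom_ord (U : Type) n (f : 'I_n -> U) (x0 : U) (i : 'I_n) :
  nth x0 (codom f) i = f i.
Proof. by rewrite codomE (nth_map i) ?size_enum_ord // nth_ord_enum. Qed.

Lemma triple_free_codomP (U : eqType) n (f : 'I_n -> U) :
  reflect (forall x y z : 'I_n, y = x.+1 :> nat -> z = y.+1 :> nat ->
             ~~ ((f x == f y) && (f y == f z)))
          (triple_free (codom f)).
Proof.
case: n f => [|n] f.
  by have := size_codom f; rewrite card_ord => /size0nil ->; constructor => -[].
apply: (iffP (triple_freeP (f ord0) _)); rewrite size_codom card_ord => tf.
  by move=> x y z yx zy; move: (tf x); rewrite -yx -zy ltn_ord !nth_codom_ord; apply.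
move=> i lt_i2; have lt_i1 := ltnW lt_i2; have lt_i := ltnW lt_i1.
rewrite (nth_codom_ord f _ (Ordinal lt_i)) (nth_codom_ord f _ (Ordinal lt_i1)).
by rewrite (nth_codom_ord f _ (Ordinal lt_i2)); apply: tf.
Qed.

Definition run_count (q m : nat) := \sum_(j < m.+1) 'C(j.+1, m - j) * q ^ j.

Definition diag_count (q m : nat) := if m is m'.+1 then q * run_count q m' else 1.

Lemma run_count0 q : run_count q 0 = 1.
Proof. by rewrite /run_count big_ord1. Qed.

Lemma run_countSS q m : run_count q m.+2 = q * (run_count q m + run_count q m.+1).
Proof.
rewrite /run_count big_ord_recl /= bin_small // mul0n add0n.
rewrite big_ord_recr /= subnn bin0 mul1n.
rewrite mulnDr [in X in _ = _ + X]big_ord_recr /= subnn bin0 mul1n.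
rewrite /bump !leq0n !add1n.
rewrite mulnDr !big_distrr addnA -big_split -expnS; congr (_ + _).
apply: eq_bigr => j _; have le_jm : j <= m by rewrite -ltnS.
rewrite !subSS subSn // binS mulnDl expnS leq0n add1n /=; nia.
Qed.

Lemma run_countS q m : run_count q m.+1 = diag_count q m + q * run_count q m.
Proof.
case: m => [|m] /=; last by rewrite run_countSS mulnDr.
rewrite run_count0 /run_count !big_ord_recr big_ord0 /= subn0 subnn bin1 bin0.
by rewrite expn0 expn1 !mul1n muln1.
Qed.

Lemma sum_nat_if_eq (T : finType) (y : T) (a b : nat) :
  \sum_(z : T) (if y == z then a else b) = a + #|T|.-1 * b.
Proof.
rewrite (bigD1 y) //= eqxx; congr (_ + _).
rewrite (eq_bigr (fun _ => b)) => [|z]; last by rewrite eq_sym => /negbTE ->.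
by rewrite sum_nat_const cardC1.
Qed.

Section Words.
Variable T : finType.
Local Notation q := #|T|.-1.

Fixpoint words n : seq (seq T) :=
  if n is n'.+1 then [seq x :: s | x <- enum T, s <- words n'] else [:: [::]].

Lemma mem_words n s : (s \in words n) = (size s == n).
Proof.
elim: n s => [|n IHn] [|x s] //=; first by apply/negbTE/allpairsP => -[[y t] []].
apply/allpairsP/idP => [[[y t] [_ /= t_n [_ ->]]]|s_n]; first by rewrite eqSS -IHn.
by exists (x, s); rewrite /= mem_enum IHn -eqSS.
Qed.

Lemma uniq_words n : uniq (words n).
Proof.
elim: n => //= n IHn; apply: allpairs_uniq => //; first exact: enum_uniq.
by move=> [x s] [y t] _ _ /= [-> ->].
Qed.

Lemma perm_codom_words n : perm_eq [seq codom f | f : {ffun 'I_n -> T}] (words n).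
Proof.
apply: uniq_perm; rewrite ?uniq_words //.
  rewrite map_inj_uniq ?enum_uniq // => f g fg.
  by apply: (can_inj fgraphK); apply: val_inj.
move=> s; apply/mapP/idP => [[f _ ->] | s_n].
  by rewrite mem_words size_codom card_ord.
have s_card : size s == #|'I_n| by rewrite card_ord -mem_words.
by exists (Finfun (Tuple s_card)); rewrite ?mem_enum // codom_ffun FinfunK.
Qed.

Lemma card_codom_words n (P : pred (seq T)) :
  #|[set f : {ffun 'I_n -> T} | P (codom f)]| = \sum_(s <- words n) P s.
Proof.
rewrite -(perm_big _ (perm_codom_words n)) big_image /= -sum1_card big_mkcond /=.
by apply: eq_bigr => f _; rewrite inE; case: (P _).
Qed.

Definition pair_count n (x y : T) := \sum_(s <- words n) triple_free [:: x, y & s].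

Lemma pair_countS n x y :
  pair_count n.+1 x y = \sum_(z : T) ~~ ((x == y) && (y == z)) * pair_count n y z.
Proof.
rewrite /pair_count big_allpairs_dep big_enum; apply: eq_bigr => z _.
by rewrite big_distrr; apply: eq_bigr => s _ /=; rewrite mulnb.
Qed.

Lemma pair_countE n x y :
  pair_count n x y = if x == y then diag_count q n else run_count q n.
Proof.
elim: n x y => [|n IHn] x y; first by rewrite /pair_count big_seq1 run_count0; case: ifP.
rewrite pair_countS run_countS; under eq_bigr do rewrite IHn.
have [<- | _] := eqVneq x y.
  rewrite (eq_bigr (fun z => if x == z then 0 else run_count q n)) ?sum_nat_if_eq //.
  by move=> z _; case: (x == z); rewrite ?mul0n ?mul1n.
rewrite (eq_bigr (fun z => if y == z then diag_count q n else run_count q n)).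
  by rewrite sum_nat_if_eq.
by move=> z _; rewrite mul1n.
Qed.

Lemma count_triple_free n :
  \sum_(s <- words n.+1) triple_free s = #|T| * run_count q n.
Proof.
rewrite big_allpairs_dep big_enum -sum_nat_const; apply: eq_bigr => x _.
case: n => [|n]; first by rewrite big_seq1 run_count0.
rewrite big_allpairs_dep big_enum run_countS -(sum_nat_if_eq x) /=.
by apply: eq_bigr => y _; rewrite -pair_countE.
Qed.

End Words.

Lemma proper_S_tour n k (c : {ffun 'I_n -> 'I_k}) :
  proper_coloring (@S_tour n) c = triple_free (codom c).
Proof.
rewrite /proper_coloring; apply/forallP/triple_free_codomP => [proper x y z yx zy | tf j].
  apply/negP => /andP [/eqP cxy /eqP cyz]; move/negP: (proper (c x)); apply.
  rewrite S_tour_dicycle; apply/existsP; exists x; rewrite inE eqxx /=.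
  apply/existsP; exists y; rewrite inE cxy eqxx /=.
  by apply/existsP; exists z; rewrite inE cyz zy yx !eqxx.
rewrite S_tour_dicycle; apply/negP.
case/existsP=> x /andP [cx /existsP [y /andP [cy /existsP [z /andP [cz]]]]].
move: cx cy cz; rewrite !inE => /eqP cx /eqP cy /eqP cz /andP [/eqP yx /eqP zy].
by move: (tf x y z yx zy); rewrite cx cy cz eqxx.
Qed.

Lemma dichromatic_S_tour n k :
  dichromatic (@S_tour n) k = \sum_(s <- words 'I_k n) triple_free s.
Proof.
by rewrite /dichromatic -card_codom_words; apply: eq_card => c; rewrite !inE proper_S_tour.
Qed.

Lemma binomial_sum_run_count q m :
  \sum_(1 <= i < m.+2) 'C(i, m.+1 - i) * (q.+1 * q ^ (i - 1)) = q.+1 * run_count q m.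
Proof.
rewrite -(add0n 1) big_addn subn1 /= big_mkord /run_count big_distrr /=.
by apply: eq_bigr => j _; rewrite addn1 subn1 /= subSS; lia.
Qed.

Theorem mainTheorem9 (n : nat) (hn : 0 < n) (k : nat) (hk : 0 < k) :
  dichromatic (@S_tour n) k =
  \sum_(1 <= i < n.+1) 'C(i, n - i) * (k * (k - 1) ^ (i - 1)).
Proof.
case: n hn => // m _; case: k hk => // q _.
by rewrite dichromatic_S_tour count_triple_free !card_ord -binomial_sum_run_count (subn1 q.+1).
Qed.
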